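(* Suppose $\phi_1,\phi_2$ satisfy the Doubrov–Ferapontov modified heavenly hierarchy $(\Phi_1\wedge\Phi_2)_-=0$, and let $u$ be a function with $g_1=u_x$ and $f_1=u_y$ (so that $f_{1,z_j}=u_{yz_j}$, $g_{1,z_j}=u_{xz_j}$). Then the Lax–Sato equations take the Hamiltonian form $$\frac{\partial\vec\phi}{\partial t_n}=\{-\lambda^n y+A_n,\vec\phi\}\ (n\ge1),\qquad \lambda\frac{\partial\vec\phi}{\partial z_j}=\{-\lambda^j x+B_j,\vec\phi\}\ (j\ge2),\qquad \lambda\frac{\partial\vec\phi}{\partial z_1}=\{B_1,\vec\phi\},$$ where $A_n=\sum_{k=1}^{n}\lambda^{n-k}g_k$, $B_j=-\sum_{m=1}^{j}\lambda^{j-m}f_m-u_{z_j}$ for $j\ge2$, and $B_1=-u_{z_1}$.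
   Context: Independent variables are $x,y$ and two infinite families $t_1,t_2,\dots$ and $z_1,z_2,\dots$; write $t:=t_1$, $z:=z_1$. $\lambda$ is a formal spectral parameter; $(\cdot)_+$ and $(\cdot)_-$ denote the parts of a formal Laurent series in $\lambda$ with nonnegative, resp. negative, powers. Consider formal series $\phi_1=-y+\sum_{j\ge2}z_j\lambda^{j-1}+\sum_{k\ge1}g_k\lambda^{-k}$, $\phi_2=x+t_1\lambda+\sum_{n\ge2}t_n\lambda^n+\sum_{m\ge1}f_m\lambda^{-m}$, where $g_k,f_m$ are functions of $(x,y,t_1,t_2,\dots,z_1,z_2,\dots)$, and $\vec\phi=(\phi_1,\phi_2)^T$. Define the 1-forms $\Phi_i=\phi_{i,x}dx+\phi_{i,y}dy+\sum_{n\ge1}\phi_{i,t_n}dt_n+\lambda\sum_{j\ge1}\phi_{i,z_j}dz_j$. The Doubrov–Ferapontov modified heavenly hierarchy is $(\Phi_1\wedge\Phi_2)_-=0$: the negative-power part of the coefficient of every basis 2-form vanishes, the coefficient of $da\wedge db$ being $\lambda^{\epsilon}(\phi_{1,a}\phi_{2,b}-\phi_{1,b}\phi_{2,a})$ with $\epsilon$ the number of $z$-variables among $a,b$. The Poisson bracket is $\{F,G\}=F_xG_y-F_yG_x$, applied componentwise to $\vec\phi$. Subscripts denote partial derivatives. *)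

(* Abstract model: "functions of (x,y,t_1,t_2,...,z_1,z_2,...)"
   are elements of a commutative ring K equipped with commuting derivations
   d a (one for every independent variable a) and with coordinate elements
   coord a satisfying d a (coord b) = delta_{ab}. *)
From HB Require Import structures.
From mathcomp Require Import all_boot all_order all_algebra.
Set Implicit Arguments. Unset Strict Implicit. Unset Printing Implicit Defensive.
Import Order.TTheory GRing.Theory Num.Theory.
Local Open Scope ring_scope.

(* Independent variables.  Index convention (shifted so that no junk variable
   exists):  Vt n  is  t_(n+1),   Vz j  is  z_(j+1). *)
Inductive var := Vx | Vy | Vt of nat | Vz of nat.

Definition tvar (n : nat) : var := Vt n.-1.
Definition zvar (j : nat) : var := Vz j.-1.

Section DF.
Variable K : comRingType.

(* formal (possibly bi-infinite) series in lambda: p |-> coefficient of lambda^p *)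
Definition fser := int -> K.

Definition is_derivation (D : K -> K) :=
  (forall r s, D (r + s) = D r + D s) /\ (forall r s, D (r * s) = D r * s + r * D s).

Definition mon (n : int) (c : K) : fser := fun p => if p == n then c else 0.

Definition shift (n : int) (s : fser) : fser := fun p => s (p - n).

(* product of two series whose coefficients vanish above degree N
   (Cauchy product, a finite sum for each coefficient) *)
Definition smul (N : nat) (a b : fser) : fser := fun p =>
  if p <= (N + N)%N%:Z then
    \sum_(k < `|(N + N)%N%:Z - p|.+1) a (N%:Z - k%:Z) * b (p - N%:Z + k%:Z)
  else 0.

Variable d : var -> K -> K.
Variable coord : var -> K.
Variables g f : nat -> K.   (* g k = g_k, f m = f_m  (k, m >= 1; index 0 unused) *)
Variable u : K.

Definition dser (a : var) (s : fser) : fser := fun p => d a (s p).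

(* phi_1 = -y + sum_{j>=2} z_j lambda^(j-1) + sum_{k>=1} g_k lambda^(-k) *)
Definition phi1 : fser := fun p =>
  if p < 0 then g `|p|%N
  else if p == 0 then - coord Vy
  else coord (Vz `|p|%N).          (* coefficient of lambda^p, p>=1, is z_(p+1) *)

(* phi_2 = x + t_1 lambda + sum_{n>=2} t_n lambda^n + sum_{m>=1} f_m lambda^(-m) *)
Definition phi2 : fser := fun p =>
  if p < 0 then f `|p|%N
  else if p == 0 then coord Vx
  else coord (Vt `|p|.-1).         (* coefficient of lambda^p, p>=1, is t_p *)

(* an upper bound on the lambda-degree of phi_{i,a} *)
Definition vdeg (a : var) : nat :=
  match a with Vt n => n.+1 | Vz j => j | _ => 0%N end.

Definition zweight (a : var) : nat :=
  match a with Vz _ => 1%N | _ => 0%N end.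

(* coefficient of da /\ db in Phi_1 /\ Phi_2:
   lambda^eps (phi_{1,a} phi_{2,b} - phi_{1,b} phi_{2,a}) *)
Definition wedge (a b : var) : fser :=
  let N := maxn (vdeg a) (vdeg b) in
  shift (zweight a + zweight b)%N%:Z
    (fun p => smul N (dser a phi1) (dser b phi2) p
              - smul N (dser b phi1) (dser a phi2) p).

Definition DF_hierarchy : Prop :=
  forall (a b : var) (p : int), p < 0 -> wedge a b p = 0.

Definition pb (N : nat) (F G : fser) : fser := fun p =>
  smul N (dser Vx F) (dser Vy G) p - smul N (dser Vy F) (dser Vx G) p.

Definition A (n : nat) : fser := fun p =>
  \sum_(1 <= k < n.+1) mon (n - k)%N%:Z (g k) p.

Definition Ht (n : nat) : fser := fun p => - mon n%:Z (coord Vy) p + A n p.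

Definition B (j : nat) : fser := fun p =>
  if (2 <= j)%N then
    - (\sum_(1 <= m < j.+1) mon (j - m)%N%:Z (f m) p) - mon 0 (d (zvar j) u) p
  else - mon 0 (d (zvar 1) u) p.

Definition Hz (j : nat) : fser := fun p =>
  if (2 <= j)%N then - mon j%:Z (coord Vx) p + B j p else B j p.

End DF.

From Pilot Require Import Defs.
From HB Require Import structures.
From mathcomp Require Import all_boot all_order all_algebra.
From mathcomp Require Import zify ring.
Import Order.TTheory GRing.Theory Num.Theory.
Local Open Scope ring_scope.

(* Write X_i, Y_i, S_i for phi_{i,x}, phi_{i,y} and phi_{i,t_n} (or lambda phi_{i,z_j}).
   The hierarchy kills the negative parts of the coefficients of dx /\ dy, da /\ dy and
   dx /\ da in Phi_1 /\ Phi_2, and their nonnegative parts only see the polynomial heads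
   of the phi_{i,a}; this gives X_1 Y_2 - Y_1 X_2 = 1, S_1 Y_2 - Y_1 S_2 = - H_y and
   X_1 S_2 - S_1 X_2 = H_x for the stated Hamiltonian H (the term u_{z_j} comes from
   g_1 = u_x, f_1 = u_y and the symmetry of second derivatives).  Cramer's rule then
   gives S_i = H_x Y_i - H_y X_i = {H, phi_i}.  Series bounded above in lambda are
   multiplied as polynomials in lambda^-1, truncated at a high enough degree. *)

Section TruncatedSeries.
Context {K : comNzRingType}.
Implicit Types (a b s : fser K) (x : K) (p q : int) (P Q R : {poly K}).

Definition deg_le (N : int) s := forall q, N < q -> s q = 0.

Lemma deg_le_trans N N' s : N <= N' -> deg_le N s -> deg_le N' s.
Proof. by move=> hN hs q hq; apply: hs; lia. Qed.

Lemma deg_le_mon (e : nat) x : deg_le e%:Z (mon e%:Z x).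
Proof. by move=> q hq; rewrite /mon ifF //; apply/eqP; lia. Qed.

Lemma deg_le_shift (N : nat) s : deg_le N%:Z s -> deg_le N.+1%:Z (shift 1 s).
Proof. by move=> hs q hq; rewrite /shift hs //; lia. Qed.

Lemma ltz_or_subn (N : int) p : N < p \/ exists i : nat, p = N - i%:Z.
Proof. by case: (ltP N p) => h; [left | right; exists (absz (N - p)%R); lia]. Qed.

Lemma smul_eq0 N a b p : (N + N)%N%:Z < p -> smul N a b p = 0.
Proof. by move=> h; rewrite /smul ifF //; apply/negbTE; rewrite -ltNge. Qed.

(* [X] stands for [lambda^-1]: coefficient [i] of [trunc M N s] is the
   coefficient of [lambda^(N - i)] in [s], for [i < M]. *)
Definition trunc (M N : nat) s : {poly K} := \poly_(i < M) s (N%:Z - i%:Z).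

Definition eqmodX (M : nat) P Q := forall i, (i < M)%N -> P`_i = Q`_i.

Lemma coef_trunc M N s i : (trunc M N s)`_i = if (i < M)%N then s (N%:Z - i%:Z) else 0.
Proof. by rewrite coef_poly. Qed.

Lemma eq_trunc M N a b : (forall q, a q = b q) -> trunc M N a = trunc M N b.
Proof. by move=> h; apply/polyP => i; rewrite !coef_trunc h. Qed.

Lemma truncN M N s : trunc M N (fun q => - s q) = - trunc M N s.
Proof. by apply/polyP => i; rewrite coefN !coef_trunc; case: ifP; rewrite ?oppr0. Qed.

Lemma coef_trunc_mul M N a b i : (i < M)%N ->
  (trunc M N a * trunc M N b)`_i = smul N a b ((N + N)%N%:Z - i%:Z).
Proof.
move=> hi; rewrite /smul ifT; last by lia.
have -> : absz ((N + N)%N%:Z - ((N + N)%N%:Z - i%:Z))%R = i by lia.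
rewrite coefM; apply: eq_bigr => [[k /= hk]] _.
rewrite !coef_trunc !ifT; try lia.
by congr (_ * b _); lia.
Qed.

Lemma trunc_smulB M N a b a' b' :
  eqmodX M (trunc M (N + N) (fun q => smul N a b q - smul N a' b' q))
           (trunc M N a * trunc M N b - trunc M N a' * trunc M N b').
Proof. by move=> i hi; rewrite coef_trunc hi coefB !coef_trunc_mul. Qed.

Lemma trunc_shift M N k s : deg_le N%:Z s ->
  eqmodX M (trunc M (N + k) s) ('X^k * trunc M N s).
Proof.
move=> hs i hi; rewrite coefXnM !coef_trunc hi.
case: ltnP => hik; first by apply: hs; lia.
by rewrite ifT; [congr (s _) | ]; lia.
Qed.

Lemma trunc_mon M N (e : nat) x : (e <= N)%N ->
  eqmodX M (trunc M N (mon e%:Z x)) (x%:P * 'X^(N - e)).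
Proof.
move=> he i hi; rewrite coef_trunc hi coefCM coefXn /mon.
by case: eqP; case: eqP; rewrite ?mulr1 ?mulr0 //; lia.
Qed.

Lemma eqmodX_refl {M P} : eqmodX M P P. Proof. by []. Qed.

Lemma eqmodX_sym {M P Q} : eqmodX M P Q -> eqmodX M Q P.
Proof. by move=> h i hi; rewrite h. Qed.

Lemma eqmodX_trans {M P Q R} : eqmodX M P Q -> eqmodX M Q R -> eqmodX M P R.
Proof. by move=> h1 h2 i hi; rewrite h1 // h2. Qed.

Lemma eqmodXD {M P Q P' Q'} : eqmodX M P P' -> eqmodX M Q Q' -> eqmodX M (P + Q) (P' + Q').
Proof. by move=> h1 h2 i hi; rewrite !coefD h1 // h2. Qed.

Lemma eqmodXM {M P Q P' Q'} : eqmodX M P P' -> eqmodX M Q Q' -> eqmodX M (P * Q) (P' * Q').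
Proof.
move=> h1 h2 i hi; rewrite !coefM; apply: eq_bigr => [[j /= hj]] _.
by rewrite h1 ?h2 //; lia.
Qed.

Lemma smulC N a b p : smul N a b p = smul N b a p.
Proof.
have [hp | [i ->]] := ltz_or_subn (N + N)%N%:Z p; first by rewrite !smul_eq0.
by rewrite -!(coef_trunc_mul _ _ _ _ _ (ltnSn i)) mulrC.
Qed.

Lemma smul_widen N N' a b p : (N <= N')%N -> deg_le N%:Z a -> deg_le N%:Z b ->
  smul N' a b p = smul N a b p.
Proof.
move=> hN da db.
have [hp | [i ->]] := ltz_or_subn (N' + N')%N%:Z p; first by rewrite !smul_eq0 //; lia.
have ta := trunc_shift i.+1 N (N' - N) _ da; have tb := trunc_shift i.+1 N (N' - N) _ db.
rewrite subnKC // in ta tb.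
rewrite -(coef_trunc_mul _ _ _ _ _ (ltnSn i)) (eqmodXM ta tb) // mulrACA -exprD coefXnM.
case: ltnP => hi; first by rewrite smul_eq0 //; lia.
by rewrite coef_trunc_mul; [congr smul | ]; lia.
Qed.

Lemma smul_shift N a b p : deg_le N%:Z b -> smul N.+1 (shift 1 a) b p = smul N a b (p - 1).
Proof.
move=> db.
have [hp | [i ->]] := ltz_or_subn (N.+1 + N.+1)%N%:Z p; first by rewrite !smul_eq0 //; lia.
have ta : trunc i.+1 N.+1 (shift 1 a) = trunc i.+1 N a.
  by apply/polyP => j; rewrite !coef_trunc /shift; case: ifP => // _; congr a; lia.
have tb := trunc_shift i.+1 N 1 _ db; rewrite addn1 in tb.
rewrite -(coef_trunc_mul _ _ _ _ _ (ltnSn i)) ta (eqmodXM eqmodX_refl tb) // mulrCA coefXnM.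
case: ltnP => hi; first by rewrite smul_eq0 //; lia.
by rewrite coef_trunc_mul; [congr smul | ]; lia.
Qed.

Lemma smul_monl N (e : nat) x b p : (e <= N)%N -> deg_le N%:Z b ->
  smul N (mon e%:Z x) b p = x * b (p - e%:Z).
Proof.
move=> he db.
have [hp | [i ->]] := ltz_or_subn (N + N)%N%:Z p; first by rewrite smul_eq0 // db ?mulr0 //; lia.
rewrite -(coef_trunc_mul _ _ _ _ _ (ltnSn i)) (eqmodXM (trunc_mon _ _ _ _ he) eqmodX_refl) //.
rewrite -mulrA coefCM coefXnM; case: ltnP => hi; first by rewrite db ?mulr0 //; lia.
by rewrite coef_trunc ifT; [congr (x * b _) | ]; lia.
Qed.

Lemma eq_smul N a a' b b' p : a =1 a' -> b =1 b' -> smul N a b p = smul N a' b' p.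
Proof. by move=> ha hb; rewrite /smul; case: ifP => // _; apply: eq_bigr => k _; rewrite ha hb. Qed.

Lemma smulDl N a a' b p :
  smul N (fun q => a q + a' q) b p = smul N a b p + smul N a' b p.
Proof.
rewrite /smul; case: ifP => _; last by rewrite addr0.
by rewrite -big_split; apply: eq_bigr => k _; rewrite mulrDl.
Qed.

Lemma smulDr N a b b' p :
  smul N a (fun q => b q + b' q) p = smul N a b p + smul N a b' p.
Proof. by rewrite smulC smulDl !(smulC _ a). Qed.

Definition neg_part s : fser K := fun q => if q < 0 then s q else 0.

Lemma smul_neg_part N a b p : -1 <= p -> smul N (neg_part a) (neg_part b) p = 0.
Proof.
move=> hp; rewrite /smul; case: ifP => // _; rewrite big1 // => [[k /= _]] _.
by rewrite /neg_part; case: ifP; case: ifP; rewrite ?mulr0 ?mul0r //; lia.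
Qed.

Lemma deg_le_neg_part s : deg_le (-1) (neg_part s).
Proof. by move=> q hq; rewrite /neg_part ifF //; lia. Qed.

Section HeadTail.
Context {a : fser K} {e : nat} {x : K}.
Hypothesis a_head : forall q, 0 <= q -> a q = mon e%:Z x q.

Lemma deg_le_head : deg_le e%:Z a.
Proof. by move=> q hq; rewrite a_head ?deg_le_mon //; lia. Qed.

Lemma neg_part_head q : a q = neg_part a q + mon e%:Z x q.
Proof.
rewrite /neg_part; case: ltP => hq; last by rewrite add0r a_head.
by rewrite /mon ifF ?addr0 //; apply/eqP; lia.
Qed.

End HeadTail.

(* The tails have degree [<= -1], so their product does not reach degree [-1]. *)
Lemma smul_head_tail {N a b} {e e' : nat} {x x' p} :
  (forall q, 0 <= q -> a q = mon e%:Z x q) -> (forall q, 0 <= q -> b q = mon e'%:Z x' q) ->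
  (e <= N)%N -> (e' <= N)%N -> -1 <= p ->
  smul N a b p = x * neg_part b (p - e%:Z) + x' * neg_part a (p - e'%:Z)
                 + (if p == (e + e')%N%:Z then x * x' else 0).
Proof.
move=> ha hb he he' hp.
have deg_neg s : deg_le N%:Z (neg_part s) by apply: deg_le_trans (deg_le_neg_part s); lia.
have deg_mon : deg_le N%:Z (mon e'%:Z x') by apply: deg_le_trans (deg_le_mon e' x'); lia.
rewrite (eq_smul _ _ _ _ _ _ (neg_part_head ha) (neg_part_head hb)).
rewrite smulDl !smulDr smul_neg_part // add0r smulC !smul_monl // /mon.
have -> : (p - e%:Z == e'%:Z) = (p == (e + e')%N%:Z) by apply/eqP/eqP; lia.
by case: eqP => _; rewrite ?addr0; ring.
Qed.

Lemma eqmodX_cramer {M} {x1 y1 x2 y2 s1 s2 hx hy w : {poly K}} :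
  eqmodX M (x1 * y2 - y1 * x2) w ->
  eqmodX M (s1 * y2 - y1 * s2) (- hy) -> eqmodX M (x1 * s2 - s1 * x2) hx ->
  eqmodX M (w * s1) (hx * y1 - hy * x1) /\ eqmodX M (w * s2) (hx * y2 - hy * x2).
Proof.
move=> hw hsy hxs.
have cofactor z1 z2 : eqmodX M (w * (z1 * s1 + z2 * s2))
    (z1 * (hx * y1 - hy * x1) + z2 * (hx * y2 - hy * x2)).
  apply: eqmodX_trans (eqmodXM (eqmodX_sym hw) eqmodX_refl) _.
  have -> : (x1 * y2 - y1 * x2) * (z1 * s1 + z2 * s2) =
    (z1 * x1 + z2 * x2) * (s1 * y2 - y1 * s2) + (z1 * y1 + z2 * y2) * (x1 * s2 - s1 * x2) by ring.
  apply: eqmodX_trans (eqmodXD (eqmodXM eqmodX_refl hsy) (eqmodXM eqmodX_refl hxs)) _.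
  have -> : (z1 * x1 + z2 * x2) * - hy + (z1 * y1 + z2 * y2) * hx =
    z1 * (hx * y1 - hy * x1) + z2 * (hx * y2 - hy * x2) by ring.
  exact: eqmodX_refl.
have := cofactor 1 0; have := cofactor 0 1.
by rewrite !mul1r !mul0r !addr0 !add0r.
Qed.

(* Dividing by [lambda^-N], the congruence determines the coefficient of
   [lambda^(2N - i)]; the truncation order is just large enough to see it. *)
Lemma bracket_coef_eqmodX N i S Y X Hx Hy : deg_le N%:Z S ->
  let P := trunc (N + i).+1 N in
  eqmodX (N + i).+1 ('X^(N + N) * P S) ('X^N * P Hx * P Y - 'X^N * P Hy * P X) ->
  S ((N + N)%N%:Z - i%:Z) =
    smul N Hx Y ((N + N)%N%:Z - i%:Z) - smul N Hy X ((N + N)%N%:Z - i%:Z).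
Proof.
move=> dS P h; pose M := (N + i).+1.
pose T q := smul N Hx Y q - smul N Hy X q.
have dT : deg_le (N + N)%N%:Z T by move=> q hq; rewrite /T !smul_eq0 ?subrr.
have lhs := trunc_shift M N (N + N) _ dS.
have rhs : eqmodX M ('X^N * P Hx * P Y - 'X^N * P Hy * P X) (trunc M ((N + N) + N) T).
  rewrite -!mulrA -mulrBr.
  apply: eqmodX_trans (eqmodXM eqmodX_refl (eqmodX_sym (trunc_smulB M N Hx Y Hy X))) _.
  exact: eqmodX_sym (trunc_shift M (N + N) N _ dT).
have := eqmodX_trans lhs (eqmodX_trans h rhs) (N + i)%N (ltnSn _).
rewrite !coef_trunc ltnSn.
have -> : (N + (N + N))%N%:Z - (N + i)%N%:Z = (N + N)%N%:Z - i%:Z by lia.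
by have -> : (N + N + N)%N%:Z - (N + i)%N%:Z = (N + N)%N%:Z - i%:Z by lia.
Qed.

Lemma smul_cramer {N X1 Y1 X2 Y2 S1 S2 Hx Hy} :
  deg_le N%:Z S1 -> deg_le N%:Z S2 -> deg_le N%:Z Hx -> deg_le N%:Z Hy ->
  (forall p, smul N X1 Y2 p - smul N Y1 X2 p = mon 0 1 p) ->
  (forall p, smul N S1 Y2 p - smul N Y1 S2 p = - Hy p) ->
  (forall p, smul N X1 S2 p - smul N S1 X2 p = Hx p) ->
  forall p, S1 p = smul N Hx Y1 p - smul N Hy X1 p /\
            S2 p = smul N Hx Y2 p - smul N Hy X2 p.
Proof.
move=> dS1 dS2 dHx dHy hw hy hx p.
have [hp | [i ->]] := ltz_or_subn (N + N)%N%:Z p.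
  by rewrite !smul_eq0 // dS1 ?dS2 ?subrr //; lia.
pose M := (N + i).+1; pose P := trunc M N.
have tw : eqmodX M (P X1 * P Y2 - P Y1 * P X2) 'X^(N + N).
  apply: eqmodX_trans (eqmodX_sym (trunc_smulB M N X1 Y2 Y1 X2)) _.
  rewrite (eq_trunc _ _ _ _ hw).
  by have := trunc_mon M (N + N) 0 (1 : K) (leq0n _); rewrite polyC1 mul1r subn0.
have ty : eqmodX M (P S1 * P Y2 - P Y1 * P S2) (- ('X^N * P Hy)).
  apply: eqmodX_trans (eqmodX_sym (trunc_smulB M N S1 Y2 Y1 S2)) _.
  by rewrite (eq_trunc _ _ _ _ hy) truncN => j hj; rewrite !coefN (trunc_shift _ _ _ _ dHy).
have tx : eqmodX M (P X1 * P S2 - P S1 * P X2) ('X^N * P Hx).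
  apply: eqmodX_trans (eqmodX_sym (trunc_smulB M N X1 S2 S1 X2)) _.
  by rewrite (eq_trunc _ _ _ _ hx); apply: trunc_shift.
have [c1 c2] := eqmodX_cramer tw ty tx.
by split; apply: bracket_coef_eqmodX.
Qed.

End TruncatedSeries.

Section Derivation.
Context {K : comNzRingType} {D : K -> K}.
Hypothesis D_derivation : is_derivation D.

Lemma derivationD r s : D (r + s) = D r + D s. Proof. by case: D_derivation. Qed.

Lemma derivation0 : D 0 = 0.
Proof.
have h := derivationD 0 0; rewrite addr0 in h.
by apply: (addrI (D 0)); rewrite addr0 -h.
Qed.

Lemma derivationN r : D (- r) = - D r.
Proof. by apply/eqP; rewrite -subr_eq0 opprK -derivationD addNr derivation0. Qed.

Lemma derivation_mon e x p : D (mon e x p) = mon e (D x) p.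
Proof. by rewrite /mon; case: ifP => // _; rewrite derivation0. Qed.

Lemma derivation_A h n p : D (A h n p) = A (fun k => D (h k)) n p.
Proof.
rewrite /A (big_morph D derivationD derivation0).
by apply: eq_bigr => k _; rewrite derivation_mon.
Qed.

End Derivation.

Section Hamiltonians.
Context {K : comNzRingType}.
Implicit Types (h : nat -> K) (x : K) (p : int).

Lemma mon0 e p : mon e (0 : K) p = 0. Proof. by rewrite /mon; case: ifP. Qed.

Lemma AE h n p :
  A h n p = if (0 <= p) && (p < n%:Z) then h (absz (p - n%:Z)) else 0.
Proof.
rewrite /A /mon; case: ifP => hp; last first.
  by rewrite big1_seq // => k; rewrite mem_index_iota => /andP[_ hk]; rewrite ifF //; lia.
have k0 : (absz (p - n%:Z)) \in index_iota 1 n.+1 by rewrite mem_index_iota; lia.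
rewrite (bigD1_seq _ k0 (iota_uniq _ _)) /= ifT; last by apply/eqP; lia.
rewrite big1_seq ?addr0 // => k /andP[hk]; rewrite mem_index_iota => hk'.
by rewrite ifF //; move/eqP: hk; lia.
Qed.

Lemma deg_le_A h n : deg_le n%:Z (A h n).
Proof. by move=> q hq; rewrite AE ifF //; lia. Qed.

End Hamiltonians.

Ltac case_ifs :=
  repeat match goal with |- context [if ?b then _ else _] => case: (boolP b) => ? end.

Section LaxSato.
Context {K : comNzRingType} (d : var -> K -> K) (coord : var -> K) (g f : nat -> K).
Hypothesis d_derivation : forall a, is_derivation (d a).
Hypothesis d_coord : forall a, d a (coord a) = 1.
Hypothesis d_coord_neq : forall a b, a <> b -> d a (coord b) = 0.

Let dD a := derivationD (d_derivation a).
Let dN a := derivationN (d_derivation a).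
Let d_mon a := derivation_mon (d_derivation a).
Let d_A a := derivation_A (d_derivation a).

Local Notation phi1 := (phi1 coord g).
Local Notation phi2 := (phi2 coord f).
Local Notation D1 a := (dser d a phi1).
Local Notation D2 a := (dser d a phi2).

Lemma dphi1_neg a q : q < 0 -> D1 a q = d a (g (absz q)).
Proof. by move=> h; rewrite /dser /Defs.phi1 h. Qed.

Lemma dphi2_neg a q : q < 0 -> D2 a q = d a (f (absz q)).
Proof. by move=> h; rewrite /dser /Defs.phi2 h. Qed.

Lemma dphi1_nonneg a q : 0 <= q ->
  D1 a q = if q == 0 then - d a (coord Vy) else d a (coord (Vz (absz q))).
Proof.
move=> h; rewrite /dser /Defs.phi1 ifF; last by lia.
by rewrite (fun_if (d a)) dN.
Qed.

Lemma dphi2_nonneg a q : 0 <= q ->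
  D2 a q = if q == 0 then d a (coord Vx) else d a (coord (Vt (absz q).-1)).
Proof. by move=> h; rewrite /dser /Defs.phi2 ifF ?(fun_if (d a)) //; lia. Qed.

Lemma dphi1_head_x q : 0 <= q -> D1 Vx q = mon 0 0 q.
Proof. by move=> h; rewrite dphi1_nonneg // !d_coord_neq // oppr0 mon0; case: ifP. Qed.

Lemma dphi1_head_y q : 0 <= q -> D1 Vy q = mon 0 (-1) q.
Proof. by move=> h; rewrite dphi1_nonneg // d_coord d_coord_neq. Qed.

Lemma dphi1_head_t m q : 0 <= q -> D1 (Vt m) q = mon 0 0 q.
Proof. by move=> h; rewrite dphi1_nonneg // !d_coord_neq // oppr0 mon0; case: ifP. Qed.

(* [phi_1] does not involve [z_1 = Vz 0]. *)
Lemma dphi1_head_z m q : 0 <= q -> D1 (Vz m) q = mon m%:Z (if (0 < m)%N then 1 else 0) q.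
Proof.
move=> h; rewrite dphi1_nonneg // d_coord_neq // oppr0 /mon.
case: eqP => [-> | q0]; first by case: m => [|m]; rewrite ?eqxx.
have [-> | neq] := eqVneq m (absz q); first by rewrite d_coord !ifT //; lia.
by rewrite d_coord_neq ?ifF //; [lia | move=> [e]; rewrite e eqxx in neq].
Qed.

Lemma dphi2_head_x q : 0 <= q -> D2 Vx q = mon 0 1 q.
Proof. by move=> h; rewrite dphi2_nonneg // d_coord d_coord_neq. Qed.

Lemma dphi2_head_y q : 0 <= q -> D2 Vy q = mon 0 0 q.
Proof. by move=> h; rewrite dphi2_nonneg // !d_coord_neq // mon0; case: ifP. Qed.

Lemma dphi2_head_t m q : 0 <= q -> D2 (Vt m) q = mon m.+1%:Z 1 q.
Proof.
move=> h; rewrite dphi2_nonneg // d_coord_neq // /mon.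
case: eqP => [-> // | q0].
have [-> | neq] := eqVneq m (absz q).-1; first by rewrite d_coord ifT //; lia.
by rewrite d_coord_neq ?ifF //; [lia | move=> [e]; rewrite e eqxx in neq].
Qed.

Lemma dphi2_head_z m q : 0 <= q -> D2 (Vz m) q = mon 0 0 q.
Proof. by move=> h; rewrite dphi2_nonneg // !d_coord_neq // mon0; case: ifP. Qed.

Lemma deg_le_dphi1 N a : (vdeg a <= N)%N -> deg_le N%:Z (D1 a).
Proof.
move=> hN; apply: (@deg_le_trans _ (vdeg a)); first lia.
case: a {hN} => [| | m | m] /=.
- exact: deg_le_head dphi1_head_x.
- exact: deg_le_head dphi1_head_y.
- by apply: deg_le_trans (deg_le_head (dphi1_head_t m)); lia.
- exact: deg_le_head (dphi1_head_z m).
Qed.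

Lemma deg_le_dphi2 N a : (vdeg a <= N)%N -> deg_le N%:Z (D2 a).
Proof.
move=> hN; apply: (@deg_le_trans _ (vdeg a)); first lia.
case: a {hN} => [| | m | m] /=.
- exact: deg_le_head dphi2_head_x.
- exact: deg_le_head dphi2_head_y.
- exact: deg_le_head (dphi2_head_t m).
- by apply: deg_le_trans (deg_le_head (dphi2_head_z m)); lia.
Qed.

Lemma wedgeE a b p : wedge d coord g f a b p =
  smul (maxn (vdeg a) (vdeg b)) (D1 a) (D2 b) (p - (zweight a + zweight b)%N%:Z)
  - smul (maxn (vdeg a) (vdeg b)) (D1 b) (D2 a) (p - (zweight a + zweight b)%N%:Z).
Proof. by []. Qed.

Hypothesis hierarchy : DF_hierarchy d coord g f.

Lemma bracket_phi N p : smul N (D1 Vx) (D2 Vy) p - smul N (D1 Vy) (D2 Vx) p = mon 0 1 p.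
Proof.
case: (ltP p 0) => hp.
  rewrite !(@smul_widen _ 0 N) //; try by [apply: deg_le_dphi1 | apply: deg_le_dphi2].
  have := hierarchy Vx Vy _ hp; rewrite wedgeE /= subr0 => ->; rewrite /mon ifF //; lia.
rewrite (smul_head_tail dphi1_head_x dphi2_head_y)
  ?(smul_head_tail dphi1_head_y dphi2_head_x) //; try lia.
by rewrite /neg_part /mon; case_ifs; try lia; ring.
Qed.

Lemma lax_sato_of_wedges N S1 S2 H :
  deg_le N%:Z S1 -> deg_le N%:Z S2 -> deg_le N%:Z (dser d Vx H) -> deg_le N%:Z (dser d Vy H) ->
  (forall p, smul N S1 (D2 Vy) p - smul N (D1 Vy) S2 p = - dser d Vy H p) ->
  (forall p, smul N (D1 Vx) S2 p - smul N S1 (D2 Vx) p = dser d Vx H p) ->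
  forall p, S1 p = pb d N H phi1 p /\ S2 p = pb d N H phi2 p.
Proof. by move=> dS1 dS2 dHx dHy; apply: smul_cramer dS1 dS2 dHx dHy (bracket_phi N). Qed.

Lemma Ht_dx n p : dser d Vx (Ht coord g n) p = A (fun k => d Vx (g k)) n p.
Proof. by rewrite /dser /Ht dD dN d_mon d_coord_neq // mon0 oppr0 add0r d_A. Qed.

Lemma Ht_dy n p : dser d Vy (Ht coord g n) p = - mon n%:Z 1 p + A (fun k => d Vy (g k)) n p.
Proof. by rewrite /dser /Ht dD dN d_mon d_coord d_A. Qed.

Lemma wedge_t_y m p : smul m.+1 (D1 (Vt m)) (D2 Vy) p - smul m.+1 (D1 Vy) (D2 (Vt m)) p
  = - dser d Vy (Ht coord g m.+1) p.
Proof.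
case: (ltP p 0) => hp.
  have := hierarchy (Vt m) Vy _ hp; rewrite wedgeE /= maxn0 subr0 => ->.
  by rewrite Ht_dy AE /mon !ifF ?(oppr0, addr0) //; lia.
rewrite (smul_head_tail (dphi1_head_t m) dphi2_head_y)
  ?(smul_head_tail dphi1_head_y (dphi2_head_t m)) //; try lia.
by rewrite Ht_dy AE /mon /neg_part; case_ifs; try lia; rewrite ?dphi1_neg //; ring.
Qed.

Lemma wedge_t_x m p : smul m.+1 (D1 Vx) (D2 (Vt m)) p - smul m.+1 (D1 (Vt m)) (D2 Vx) p
  = dser d Vx (Ht coord g m.+1) p.
Proof.
case: (ltP p 0) => hp.
  have := hierarchy (Vt m) Vx _ hp; rewrite wedgeE /= maxn0 subr0 => /eqP.
  by rewrite -oppr_eq0 opprB => /eqP ->; rewrite Ht_dx AE ifF //; lia.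
rewrite (smul_head_tail dphi1_head_x (dphi2_head_t m))
  ?(smul_head_tail (dphi1_head_t m) dphi2_head_x) //; try lia.
by rewrite Ht_dx AE /mon /neg_part; case_ifs; try lia; rewrite ?dphi1_neg //; ring.
Qed.

Lemma lax_sato_t m p :
  D1 (Vt m) p = pb d m.+1 (Ht coord g m.+1) phi1 p /\
  D2 (Vt m) p = pb d m.+1 (Ht coord g m.+1) phi2 p.
Proof.
apply: lax_sato_of_wedges (wedge_t_y m) (wedge_t_x m) _;
  try by [apply: deg_le_dphi1 | apply: deg_le_dphi2].
- by move=> q hq; rewrite Ht_dx deg_le_A.
- by move=> q hq; rewrite Ht_dy deg_le_A // deg_le_mon // oppr0 addr0.
Qed.

Variable u : K.
Hypothesis d_comm : forall a b r, d a (d b r) = d b (d a r).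
Hypothesis g1_u : g 1%N = d Vx u.
Hypothesis f1_u : f 1%N = d Vy u.

Lemma Hz_dx m p : dser d Vx (Hz d coord f u m.+1) p =
  (if (0 < m)%N then - mon m.+1%:Z 1 p - A (fun k => d Vx (f k)) m.+1 p else 0)
  - mon 0 (d Vx (d (Vz m) u)) p.
Proof.
rewrite /dser /Hz /B; case: m => [|m] /=.
  by rewrite dN d_mon sub0r.
by rewrite -/(A f m.+2 p) !dD !dN !d_mon d_A d_coord; ring.
Qed.

Lemma Hz_dy m p : dser d Vy (Hz d coord f u m.+1) p =
  (if (0 < m)%N then - A (fun k => d Vy (f k)) m.+1 p else 0) - mon 0 (d Vy (d (Vz m) u)) p.
Proof.
rewrite /dser /Hz /B; case: m => [|m] /=.
  by rewrite dN d_mon sub0r.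
by rewrite -/(A f m.+2 p) !dD !dN !d_mon d_A d_coord_neq // mon0; ring.
Qed.

Lemma wedge_z_y m p :
  smul m.+1 (shift 1 (D1 (Vz m))) (D2 Vy) p - smul m.+1 (D1 Vy) (shift 1 (D2 (Vz m))) p
  = - dser d Vy (Hz d coord f u m.+1) p.
Proof.
rewrite smul_shift; last by apply: deg_le_dphi2.
rewrite (smulC _ (D1 Vy)) smul_shift; last by apply: deg_le_dphi1.
rewrite (smulC _ (D2 (Vz m))).
case: (ltP p 0) => hp.
  have := hierarchy (Vz m) Vy _ hp; rewrite wedgeE /= maxn0 => ->.
  by rewrite Hz_dy AE /mon; case_ifs; try lia; ring.
rewrite (smul_head_tail (dphi1_head_z m) dphi2_head_y)
  ?(smul_head_tail dphi1_head_y (dphi2_head_z m)) //; try lia.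
rewrite Hz_dy AE /mon /neg_part.
have -> : p - 1 - m%:Z = p - m.+1%:Z by lia.
(* The constant term is where [f_1 = u_y] enters. *)
have [-> | p0] := eqVneq p 0.
  rewrite (_ : 0 - 1 - 0%N%:Z = -1) //.
  by case_ifs; try lia; rewrite ?dphi1_neg ?dphi2_neg //= f1_u d_comm; ring.
by case_ifs; try lia; rewrite ?dphi1_neg ?dphi2_neg //; ring.
Qed.

Lemma wedge_z_x m p :
  smul m.+1 (D1 Vx) (shift 1 (D2 (Vz m))) p - smul m.+1 (shift 1 (D1 (Vz m))) (D2 Vx) p
  = dser d Vx (Hz d coord f u m.+1) p.
Proof.
rewrite smulC smul_shift; last by apply: deg_le_dphi1.
rewrite smul_shift; last by apply: deg_le_dphi2.
rewrite (smulC _ (D2 (Vz m))).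
case: (ltP p 0) => hp.
  have := hierarchy (Vz m) Vx _ hp; rewrite wedgeE /= maxn0 => /eqP.
  rewrite -oppr_eq0 opprB => /eqP ->.
  by rewrite Hz_dx AE /mon; case_ifs; try lia; ring.
rewrite (smul_head_tail dphi1_head_x (dphi2_head_z m))
  ?(smul_head_tail (dphi1_head_z m) dphi2_head_x) //; try lia.
rewrite Hz_dx AE /mon /neg_part.
have -> : p - 1 - m%:Z = p - m.+1%:Z by lia.
have [-> | p0] := eqVneq p 0.
  rewrite (_ : 0 - 1 - 0%N%:Z = -1) //.
  by case_ifs; try lia; rewrite ?dphi1_neg ?dphi2_neg //= g1_u d_comm; ring.
by case_ifs; try lia; rewrite ?dphi1_neg ?dphi2_neg //; ring.
Qed.

Lemma lax_sato_z m p :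
  shift 1 (D1 (Vz m)) p = pb d m.+1 (Hz d coord f u m.+1) phi1 p /\
  shift 1 (D2 (Vz m)) p = pb d m.+1 (Hz d coord f u m.+1) phi2 p.
Proof.
apply: lax_sato_of_wedges (wedge_z_y m) (wedge_z_x m) _.
- by apply/deg_le_shift/deg_le_dphi1.
- by apply/deg_le_shift/deg_le_dphi2.
- by move=> q hq; rewrite Hz_dx AE /mon; case_ifs; try lia; ring.
- by move=> q hq; rewrite Hz_dy AE /mon; case_ifs; try lia; ring.
Qed.

End LaxSato.

Theorem mainTheorem3 (K : comRingType) (d : var -> K -> K) (coord : var -> K)
    (g f : nat -> K) (u : K) :
  (forall a, is_derivation (d a)) ->
  (forall a b r, d a (d b r) = d b (d a r)) ->
  (forall a, d a (coord a) = 1) ->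
  (forall a b, a <> b -> d a (coord b) = 0) ->
  DF_hierarchy d coord g f ->
  g 1%N = d Vx u -> f 1%N = d Vy u ->
  (forall n : nat, (1 <= n)%N -> forall p : int,
      dser d (tvar n) (phi1 coord g) p = pb d n (Ht coord g n) (phi1 coord g) p /\
      dser d (tvar n) (phi2 coord f) p = pb d n (Ht coord g n) (phi2 coord f) p) /\
  (forall j : nat, (1 <= j)%N -> forall p : int,
      shift 1 (dser d (zvar j) (phi1 coord g)) p
        = pb d j (Hz d coord f u j) (phi1 coord g) p /\
      shift 1 (dser d (zvar j) (phi2 coord f)) p
        = pb d j (Hz d coord f u j) (phi2 coord f) p).
Proof.
move=> derivation comm coord1 coord0 hierarchy g1 f1.
by split=> [] [|m] // _ p; [exact: lax_sato_t | exact: lax_sato_z].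
Qed.
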